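(* Let $\ell$ be an integer with $\ell\ge 6$. Then the integer program $$\text{minimize } x+2y+3z \quad\text{subject to}\quad x+y+z-s=\binom{\ell}{2}-\ell,\quad x\le \binom{s}{2},\quad x,y,z,s\in\mathbb{N}$$ has a unique optimal solution, namely $x=\binom{\ell}{2}$, $y=0$, $z=0$, $s=\ell$.
   Context: $\mathbb{N}$ denotes the set of non-negative integers, and $\binom{s}{2}=s(s-1)/2$. *)

From mathcomp Require Import all_boot.
Set Implicit Arguments. Unset Strict Implicit. Unset Printing Implicit Defensive.

(* The equation
   x + y + z - s = C(l,2) - l is an integer equation; since l >= 3 gives
   C(l,2) >= l, it is equivalently written in nat as x + y + z = (C(l,2) - l) + s. *)
Definition feasible (l x y z s : nat) : Prop :=
  x + y + z = ('C(l, 2) - l) + s /\ x <= 'C(s, 2).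

Definition objective (x y z : nat) : nat := x + 2 * y + 3 * z.

Definition optimal (l x y z s : nat) : Prop :=
  feasible l x y z s /\
  forall x' y' z' s', feasible l x' y' z' s' -> objective x y z <= objective x' y' z'.

From mathcomp Require Import all_boot zify.

Set Implicit Arguments.
Unset Strict Implicit.
Unset Printing Implicit Defensive.

(* Writing the constraint as x + y + z = C(l,2) - l + s, the objective equals
   C(l,2) + (s - l) + y + 2z.  For s >= l this is at least C(l,2), with equality
   only at s = l, y = z = 0.  For s < l the bound x <= C(s,2) forces
   y + z >= C(l,2) - l + s - C(s,2), and because C(l,2) - C(s,2) exceeds
   2(l - s) once l >= 6, the objective is then strictly larger than C(l,2). *)

Lemma mul2_bin2 n : 2 * 'C(n, 2) = n * (n - 1).
Proof. by elim: n => [|n IHn] //; rewrite binS bin1; nia. Qed.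

Lemma leq_bin2 l : 3 <= l -> l <= 'C(l, 2).
Proof. by move=> hl; have := mul2_bin2 l; nia. Qed.

Lemma bin2_gap l s : 6 <= l -> s < l -> 'C(s, 2) + 2 * (l - s) < 'C(l, 2).
Proof. by move=> hl hsl; have := mul2_bin2 l; have := mul2_bin2 s; nia. Qed.

Lemma objective_feasible l x y z s : 3 <= l -> feasible l x y z s ->
  objective x y z + l = 'C(l, 2) + s + y + 2 * z.
Proof. by move=> /leq_bin2 hl [he _]; rewrite /objective; lia. Qed.

Lemma objective_feasible_gt l x y z s : 6 <= l -> feasible l x y z s ->
  s < l -> 'C(l, 2) < objective x y z.
Proof.
move=> hl hf hsl; have hl3 : 3 <= l by lia.
have := objective_feasible hl3 hf; have := bin2_gap hl hsl; have := leq_bin2 hl3.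
by case: hf; lia.
Qed.

Lemma objective_feasible_ge l x y z s : 6 <= l -> feasible l x y z s ->
  'C(l, 2) <= objective x y z /\
  ('C(l, 2) = objective x y z -> (x, y, z, s) = ('C(l, 2), 0, 0, l)).
Proof.
move=> hl hf; have [hsl|hls] := ltnP s l.
  by have := objective_feasible_gt hl hf hsl; lia.
have hl3 : 3 <= l by lia.
have hobj := objective_feasible hl3 hf; have [he _] := hf; have := leq_bin2 hl3.
split=> [|hopt]; first by lia.
have [-> -> ->] : [/\ s = l, y = 0 & z = 0] by split; lia.
by congr (_, _, _, _); lia.
Qed.

Theorem lemma6 (l : nat) : 6 <= l ->
  optimal l 'C(l, 2) 0 0 l /\
  (forall x y z s, optimal l x y z s -> (x, y, z, s) = ('C(l, 2), 0, 0, l)).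
Proof.
move=> hl.
have hfeas : feasible l 'C(l, 2) 0 0 l.
  by split=> //; have := @leq_bin2 l; lia.
have hval : objective 'C(l, 2) 0 0 = 'C(l, 2) by rewrite /objective; lia.
split.
  split=> // x y z s hf; rewrite hval.
  by case: (objective_feasible_ge hl hf).
move=> x y z s [hf hmin].
have [hge heq] := objective_feasible_ge hl hf.
apply: heq; have := hmin _ _ _ _ hfeas; rewrite hval; lia.
Qed.
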